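(* Let $\lambda\in K$ and $S=\{D(xy)-D(x)y-xD(y)-\lambda D(x)D(y)\mid x,y\in\mathfrak{S}(X)\}\subseteq K\langle X;D\rangle$. Then $K\langle X;D|S\rangle=K\langle X;D\rangle/Id(S)$ is a free $\lambda$-differential algebra on the set $X$, with $K$-basis $S(D^\omega(X))$.
   Context: $K$ is a commutative ring with unit. A $\lambda$-differential algebra is an associative $K$-algebra $R$ with a $K$-linear $D:R\to R$ satisfying $D(xy)=D(x)y+xD(y)+\lambda D(x)D(y)$ for all $x,y\in R$; free on $X$ means every map from $X$ to such an algebra extends uniquely to a homomorphism commuting with $D$. $S(Y)$ is the free semigroup on $Y$; $\mathfrak{S}_0=S(X)$, $\mathfrak{S}_n=S(X\cup\{D(u)\mid u\in\mathfrak{S}_{n-1}\})$, $\mathfrak{S}(X)=\bigcup_n\mathfrak{S}_n$; $K\langle X;D\rangle$ is the free $K$-module on $\mathfrak{S}(X)$ with concatenation product and $D$ extended linearly. $Id(S)$ is the $K$-span of all $u|_s$, $u$ a word on $X\cup\{\star\}$ (with $D$) containing exactly one $\star$, $u|_s$ the substitution of $s\in S$ for $\star$. $D^\omega(X)=\{D^i(x)\mid i\ge0,x\in X\}$, $D^0(x)=x$. *)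

From Stdlib Require Import ClassicalEpsilon List.
From HB Require Import structures.
From mathcomp Require Import all_boot all_algebra.
From Stdlib Require Import ClassicalEpsilon.

Set Implicit Arguments.
Unset Strict Implicit.
Unset Printing Implicit Defensive.
Import GRing.Theory.
Local Open Scope ring_scope.

Record ldalg_ops (K : Type) := LDOps {
  ld_car :> Type;
  ld_zero : ld_car;
  ld_add : ld_car -> ld_car -> ld_car;
  ld_opp : ld_car -> ld_car;
  ld_scale : K -> ld_car -> ld_car;
  ld_mul : ld_car -> ld_car -> ld_car;
  ld_D : ld_car -> ld_car }.

(* R is an associative K-algebra (not necessarily unital: the free objects
   are built on free semigroups) with a K-linear D satisfying
   D(xy) = D(x)y + xD(y) + lam D(x)D(y). *)
Definition is_ldalg (K : comPzRingType) (lam : K) (A : ldalg_ops K) : Prop :=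
  let z := ld_zero A in let ad := @ld_add K A in let op := @ld_opp K A in
  let sc := @ld_scale K A in let mu := @ld_mul K A in let D := @ld_D K A in
  (forall a b c, ad a (ad b c) = ad (ad a b) c) /\
  (forall a b, ad a b = ad b a) /\
  (forall a, ad z a = a) /\
  (forall a, ad (op a) a = z) /\
  (forall k a b, sc k (ad a b) = ad (sc k a) (sc k b)) /\
  (forall k l a, sc (k + l) a = ad (sc k a) (sc l a)) /\
  (forall k l a, sc (k * l) a = sc k (sc l a)) /\
  (forall a, sc 1 a = a) /\
  (forall a b c, mu a (mu b c) = mu (mu a b) c) /\
  (forall a b c, mu a (ad b c) = ad (mu a b) (mu a c)) /\
  (forall a b c, mu (ad a b) c = ad (mu a c) (mu b c)) /\
  (forall k a b, mu (sc k a) b = sc k (mu a b)) /\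
  (forall k a b, mu a (sc k b) = sc k (mu a b)) /\
  (forall a b, D (ad a b) = ad (D a) (D b)) /\
  (forall k a, D (sc k a) = sc k (D a)) /\
  (forall a b, D (mu a b) = ad (ad (mu (D a) b) (mu a (D b))) (sc lam (mu (D a) (D b)))).

Definition is_ldhom (K : Type) (A B : ldalg_ops K) (h : A -> B) : Prop :=
  (forall a b, h (ld_add a b) = ld_add (h a) (h b)) /\
  (forall k a, h (ld_scale k a) = ld_scale k (h a)) /\
  (forall a b, h (ld_mul a b) = ld_mul (h a) (h b)) /\
  (forall a, h (ld_D a) = ld_D (h a)).

Definition is_free_ldalg (K : comPzRingType) (lam : K) (X : Type)
    (A : ldalg_ops K) (i : X -> A) : Prop :=
  forall (B : ldalg_ops K), is_ldalg lam B -> forall f : X -> B,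
    exists h : A -> B, (is_ldhom h /\ forall x, h (i x) = f x) /\
      forall h' : A -> B, is_ldhom h' -> (forall x, h' (i x) = f x) ->
        forall a, h' a = h a.

Definition lincomb (K : Type) (A : ldalg_ops K) (I : Type) (b : I -> A)
    (l : seq (K * I)%type) : A :=
  foldr (fun t acc => ld_add (ld_scale t.1 (b t.2)) acc) (ld_zero A) l.

Definition is_basis (K : comPzRingType) (A : ldalg_ops K) (I : Type)
    (P : I -> Prop) (b : I -> A) : Prop :=
  (forall a : A, exists l : seq (K * I)%type,
      (forall t, List.In t l -> P t.2) /\ a = lincomb b l) /\
  (forall l : seq (K * I)%type, (forall t, List.In t l -> P t.2) ->
      List.NoDup (map snd l) -> lincomb b l = ld_zero A ->
      forall t, List.In t l -> t.1 = 0).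

(* The words frak S(X): letters are x in X or D(u) for a word u;       *)
(* a word is a nonempty sequence of letters (free semigroup).         *)

Inductive letter (X : Type) : Type :=
| Lx of X
| LD of letter X & seq (letter X).   (* LD a s = D(a s) *)

Definition word (X : Type) : Type := (letter X * seq (letter X))%type.

Definition wcat (X : Type) (u v : word X) : word X :=
  (u.1, u.2 ++ v.1 :: v.2).

(* all factorisations w = u v of a word into two (nonempty) words *)
Definition splits (X : Type) (w : word X) : seq (word X * word X)%type :=
  [seq ((w.1, take i w.2), (nth w.1 w.2 i, drop i.+1 w.2)) | i <- iota 0 (size w.2)].

(* D^omega(X) letters and the words of S(D^omega(X)) *)
Fixpoint is_Dletter (X : Type) (a : letter X) : bool :=
  match a with
  | Lx _ => true
  | LD b s => (size s == 0)%N && is_Dletter b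
  end.

Definition is_Dword (X : Type) (w : word X) : Prop :=
  is_Dletter w.1 && all (@is_Dletter X) w.2.

(* K<X;D>: finitely supported coefficient functions on words.          *)

Section FreeAlg.
Variables (K : comPzRingType) (X : Type).

Definition fsupp (f : word X -> K) : Prop :=
  exists s : seq (word X), forall w, ~ List.In w s -> f w = 0.

Definition pzero : word X -> K := fun _ => 0.
Definition padd (f g : word X -> K) : word X -> K := fun w => f w + g w.
Definition popp (f : word X -> K) : word X -> K := fun w => - f w.
Definition pscale (k : K) (f : word X -> K) : word X -> K := fun w => k * f w.
Definition pmul (f g : word X -> K) : word X -> K :=
  fun w => \sum_(p <- splits w) f p.1 * g p.2.
(* D extended linearly: D(u) is the one-letter word D(u) *)
Definition pD (f : word X -> K) : word X -> K :=
  fun w => match w with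
           | (LD a s, [::]) => f (a, s)
           | _ => 0
           end.
Definition pword (u : word X) : word X -> K :=
  fun w => if excluded_middle_informative (w = u) then 1 else 0.

(* ⋆-words: words on X ∪ {⋆} (with D) containing exactly one ⋆ *)
Inductive ctx : Type :=
| Hole
| CLmul of word X & ctx
| CRmul of ctx & word X
| CDop of ctx.

Fixpoint subst (c : ctx) (s : word X -> K) : word X -> K :=
  match c with
  | Hole => s
  | CLmul u c' => pmul (pword u) (subst c' s)
  | CRmul c' u => pmul (subst c' s) (pword u)
  | CDop c' => pD (subst c' s)
  end.

Variable lam : K.

Definition Selt (x y : word X) : word X -> K :=
  padd (pD (pword (wcat x y)))
   (popp (padd (padd (pmul (pD (pword x)) (pword y)) (pmul (pword x) (pD (pword y))))
               (pscale lam (pmul (pD (pword x)) (pD (pword y)))))).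

(* Id(S): the K-span of all u|_s, s in S *)
Definition inIdS (f : word X -> K) : Prop :=
  exists l : seq (K * ctx * (word X * word X))%type,
    f = fun w => \sum_(t <- l) t.1.1 * subst t.1.2 (Selt t.2.1 t.2.2) w.

Definition cls (f : word X -> K) : (word X -> K) -> Prop :=
  fun g => fsupp g /\ inIdS (padd f (popp g)).

Definition Qcar : Type :=
  {P : (word X -> K) -> Prop | exists f, fsupp f /\ P = cls f}.

Lemma fsupp_pzero : fsupp pzero.
Proof. by exists [::]. Qed.

Definition Q0 : Qcar := exist _ (cls pzero) (ex_intro _ pzero (conj fsupp_pzero erefl)).

Definition Qinh : inhabited Qcar := inhabits Q0.

Definition qof (f : word X -> K) : Qcar :=
  epsilon Qinh (fun c => proj1_sig c = cls f).

Definition rep (q : Qcar) : word X -> K :=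
  proj1_sig (constructive_indefinite_description _ (proj2_sig q)).

Definition Qops : ldalg_ops K :=
  @LDOps K Qcar (qof pzero)
    (fun a b => qof (padd (rep a) (rep b)))
    (fun a => qof (popp (rep a)))
    (fun k a => qof (pscale k (rep a)))
    (fun a b => qof (pmul (rep a) (rep b)))
    (fun a => qof (pD (rep a))).

Definition iotaQ (x : X) : Qops := qof (pword (Lx x, [::])).

Definition qword (w : word X) : Qops := qof (pword w).

End FreeAlg.

From Stdlib Require Import Lia ClassicalEpsilon FunctionalExtensionality ProofIrrelevance PropExtensionality List.
From HB Require Import structures.
From mathcomp Require Import all_boot all_algebra.
Set Implicit Arguments. Unset Strict Implicit. Unset Printing Implicit Defensive.
Import GRing.Theory.
Local Open Scope ring_scope.

(* Elements of K<X;D> are finitely supported coefficient functions on words.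
   1. The K-algebra operations and the linear map D of K<X;D> preserve the
      congruence modulo Id(S), so the K-algebra axioms transfer along the
      (surjective) class map; the lambda-Leibniz rule holds on the classes of
      words since S lies in Id(S), and it extends to all elements because it is
      bilinear and words span.
   2. Freeness: given f : X -> B, evaluating words in B and extending linearly
      gives a map K<X;D> -> B which is multiplicative, commutes with D and kills
      Id(S); it descends to the quotient.  Uniqueness: classes of words are
      generated from X by products and D.
   3. Spanning: in any lambda-differential algebra generated by words, the
      lambda-Leibniz rule rewrites D of a product, so D-words span.
   4. Independence: K<X;D> itself carries a lambda-derivation defined on words
      by Leibniz expansion, for which every D-word evaluates to itself; the
      universal map from the quotient to this model sends the classes of
      D-words to linearly independent elements. *)

Definition letter_eqb (X : Type) (a b : letter X) : bool :=
  if excluded_middle_informative (a = b) then true else false.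

Lemma letter_eqbP (X : Type) : Equality.axiom (@letter_eqb X).
Proof. by move=> a b; rewrite /letter_eqb; case: excluded_middle_informative => h; constructor. Qed.

HB.instance Definition _ (X : Type) := hasDecEq.Build (letter X) (@letter_eqbP X).

Lemma mem_In (T : eqType) (x : T) (s : seq T) : x \in s <-> List.In x s.
Proof.
elim: s => [|y s IH] //=; rewrite in_cons; split.
  by case/orP => [/eqP ->|/IH]; [left|right].
by case => [->|/IH ->]; rewrite ?eqxx ?orbT.
Qed.

Lemma NoDup_uniq (T : eqType) (s : seq T) : NoDup s -> uniq s.
Proof.
elim: s => [|x s IH] //= h; inversion h; subst; apply/andP; split; last exact: IH.
by apply/negP => /mem_In.
Qed.

Lemma uniq_flatten_map (T S : eqType) (s : seq T) (G : T -> seq S) :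
  uniq s -> (forall x, x \in s -> uniq (G x)) ->
  (forall x y e, x \in s -> y \in s -> e \in G x -> e \in G y -> x = y) ->
  uniq (flatten (map G s)).
Proof.
elim: s => [|x s IH] //= /andP[hx hs] hu hd.
rewrite cat_uniq hu ?mem_head // IH //; last first.
- by move=> a b e ha hb; apply: hd; rewrite in_cons ?ha ?hb orbT.
- by move=> y hy; apply: hu; rewrite in_cons hy orbT.
rewrite andbT; apply/hasP => -[e /flatten_mapP[y hy hey] hex].
have exy : x = y by apply: (hd x y e) => //; rewrite in_cons ?eqxx ?hy ?orbT.
by move: hy; rewrite -exy (negbTE hx).
Qed.

Section AlgebraAxioms.
Variables (K : comPzRingType) (A : ldalg_ops K).
Local Notation z := (ld_zero A).
Local Notation ad := (@ld_add K A).
Local Notation op := (@ld_opp K A).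
Local Notation sc := (@ld_scale K A).
Local Notation mu := (@ld_mul K A).
Local Notation D := (@ld_D K A).

Record kalgebra : Prop := KAlgebra {
  ax_addA : forall a b c, ad a (ad b c) = ad (ad a b) c;
  ax_addC : forall a b, ad a b = ad b a;
  ax_add0 : forall a, ad z a = a;
  ax_addN : forall a, ad (op a) a = z;
  ax_scD : forall k a b, sc k (ad a b) = ad (sc k a) (sc k b);
  ax_scDl : forall k l a, sc (k + l) a = ad (sc k a) (sc l a);
  ax_scM : forall k l a, sc (k * l) a = sc k (sc l a);
  ax_sc1 : forall a, sc 1 a = a;
  ax_mulA : forall a b c, mu a (mu b c) = mu (mu a b) c;
  ax_mulDr : forall a b c, mu a (ad b c) = ad (mu a b) (mu a c);
  ax_mulDl : forall a b c, mu (ad a b) c = ad (mu a c) (mu b c);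
  ax_mulZl : forall k a b, mu (sc k a) b = sc k (mu a b);
  ax_mulZr : forall k a b, mu a (sc k b) = sc k (mu a b) }.

Definition leibniz_rhs (lam : K) (a b : A) : A :=
  ad (ad (mu (D a) b) (mu a (D b))) (sc lam (mu (D a) (D b))).

Lemma ldalg_kalgebra lam : is_ldalg lam A -> kalgebra.
Proof.
move=> [h1 [h2 [h3 [h4 [h5 [h6 [h7 [h8 [h9 [h10 [h11 [h12 [h13 _]]]]]]]]]]]]].
by constructor.
Qed.

Lemma ldalg_D_laws lam : is_ldalg lam A ->
  (forall a b, D (ad a b) = ad (D a) (D b)) /\ (forall k a, D (sc k a) = sc k (D a)) /\
  (forall a b, D (mu a b) = leibniz_rhs lam a b).
Proof. by move=> [h1 [h2 [h3 [h4 [h5 [h6 [h7 [h8 [h9 [h10 [h11 [h12 [h13 [h14 [h15 h16]]]]]]]]]]]]]]]. Qed.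

Lemma ldalgI lam : kalgebra -> (forall a b, D (ad a b) = ad (D a) (D b)) ->
  (forall k a, D (sc k a) = sc k (D a)) -> (forall a b, D (mu a b) = leibniz_rhs lam a b) ->
  is_ldalg lam A.
Proof. by move=> [*] *; do !split. Qed.

Hypothesis HA : kalgebra.

Lemma ld_addA : associative ad. Proof. move=> a b c; exact: (ax_addA HA). Qed.
HB.instance Definition _ := Monoid.isComLaw.Build A z ad ld_addA (ax_addC HA) (ax_add0 HA).

Lemma ld_addr0 a : ad a z = a. Proof. by rewrite (ax_addC HA) (ax_add0 HA). Qed.
Lemma ld_addrN a : ad a (op a) = z. Proof. by rewrite (ax_addC HA) (ax_addN HA). Qed.
Lemma ld_addI a b c : ad a b = ad a c -> b = c.
Proof.
move=> h; rewrite -[b](ax_add0 HA) -[c](ax_add0 HA) -(ax_addN HA a).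
by rewrite -!(ax_addA HA) h.
Qed.
Lemma ld_addCA a b c : ad a (ad b c) = ad b (ad a c).
Proof. by rewrite !(ax_addA HA) [ad a b](ax_addC HA). Qed.
Lemma ld_addACA a b c d : ad (ad a b) (ad c d) = ad (ad a c) (ad b d).
Proof. by rewrite -!(ax_addA HA) (ld_addCA b). Qed.

(* An additively idempotent element is zero; this yields all the zero laws. *)
Lemma ld_idem_zero a : ad a a = a -> a = z.
Proof. by move=> h; apply: (@ld_addI a); rewrite ld_addr0. Qed.
Lemma ld_scale0 a : sc 0 a = z.
Proof. by apply: ld_idem_zero; rewrite -(ax_scDl HA) addr0. Qed.
Lemma ld_scalez k : sc k z = z.
Proof. by apply: ld_idem_zero; rewrite -(ax_scD HA) (ax_add0 HA). Qed.
Lemma ld_mulz a : mu a z = z.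
Proof. by apply: ld_idem_zero; rewrite -(ax_mulDr HA) (ax_add0 HA). Qed.
Lemma ld_zmul a : mu z a = z.
Proof. by apply: ld_idem_zero; rewrite -(ax_mulDl HA) (ax_add0 HA). Qed.
Lemma ld_oppE a : op a = sc (-1) a.
Proof.
apply: (@ld_addI a); rewrite ld_addrN -{1}[a](ax_sc1 HA) -(ax_scDl HA).
by rewrite subrr ld_scale0.
Qed.

Local Notation lsum s F := (\big[ad/z]_(i <- s) F i).

Lemma ld_scale_sum (I : Type) k (s : seq I) F : sc k (lsum s F) = lsum s (fun i => sc k (F i)).
Proof. by elim: s => [|i s IH]; rewrite ?big_nil ?ld_scalez // !big_cons (ax_scD HA) IH. Qed.
Lemma ld_mul_suml (I : Type) (s : seq I) F b : mu (lsum s F) b = lsum s (fun i => mu (F i) b).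
Proof. by elim: s => [|i s IH]; rewrite ?big_nil ?ld_zmul // !big_cons (ax_mulDl HA) IH. Qed.
Lemma ld_mul_sumr (I : Type) (s : seq I) F b : mu b (lsum s F) = lsum s (fun i => mu b (F i)).
Proof. by elim: s => [|i s IH]; rewrite ?big_nil ?ld_mulz // !big_cons (ax_mulDr HA) IH. Qed.

Lemma ld_sum_split (I : Type) (s : seq I) F G :
  lsum s (fun i => ad (F i) (G i)) = ad (lsum s F) (lsum s G).
Proof. exact: big_split. Qed.

Lemma ld_sum_zero (I : Type) (s : seq I) F : (forall i, F i = z) -> lsum s F = z.
Proof. by move=> h; rewrite big1. Qed.

Lemma lincombE (I : Type) (b : I -> A) l : lincomb b l = lsum l (fun t => sc t.1 (b t.2)).
Proof. by elim: l => [|t l IH] /=; rewrite ?big_nil // big_cons IH. Qed.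

Lemma lincomb_cat (I : Type) (b : I -> A) l1 l2 :
  lincomb b (l1 ++ l2) = ad (lincomb b l1) (lincomb b l2).
Proof. by rewrite !lincombE big_cat. Qed.

Lemma ld_sum_eq_common (I : eqType) (F : I -> A) (r1 r2 : seq I) : uniq r1 -> uniq r2 ->
  (forall i, i \in r1 -> i \notin r2 -> F i = z) ->
  (forall i, i \in r2 -> i \notin r1 -> F i = z) -> lsum r1 F = lsum r2 F.
Proof.
move=> u1 u2 h1 h2.
have -> : lsum r1 F = \big[ad/z]_(i <- r1 | i \in r2) F i.
  by rewrite [RHS]big_rmcond_in // => i /h1.
have -> : lsum r2 F = \big[ad/z]_(i <- r2 | i \in r1) F i.
  by rewrite [RHS]big_rmcond_in // => i /h2.
rewrite -[LHS]big_filter -[RHS]big_filter; apply: perm_big.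
apply: uniq_perm; rewrite ?filter_uniq // => i.
by rewrite !mem_filter andbC.
Qed.


Section Leibniz.
Variable lam : K.
Hypothesis DD : forall a b, D (ad a b) = ad (D a) (D b).
Hypothesis DZ : forall k a, D (sc k a) = sc k (D a).

Lemma ld_Dz : D z = z. Proof. by rewrite -{1}(ld_scale0 z) DZ ld_scale0. Qed.
Lemma ld_D_sum (I : Type) (s : seq I) F : D (lsum s F) = lsum s (fun i => D (F i)).
Proof. by elim: s => [|i s IH]; rewrite ?big_nil ?ld_Dz // !big_cons DD IH. Qed.

Definition leibniz_at a b := D (mu a b) = leibniz_rhs lam a b.

Lemma leibniz_at_zl b : leibniz_at z b.
Proof. by rewrite /leibniz_at /leibniz_rhs ld_zmul ld_Dz !ld_zmul ld_scalez !(ax_add0 HA). Qed.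
Lemma leibniz_at_zr a : leibniz_at a z.
Proof. by rewrite /leibniz_at /leibniz_rhs ld_mulz ld_Dz !ld_mulz ld_scalez !(ax_add0 HA). Qed.
Lemma leibniz_at_scl k a b : leibniz_at a b -> leibniz_at (sc k a) b.
Proof.
rewrite /leibniz_at /leibniz_rhs => h; rewrite (ax_mulZl HA) DZ h DZ !(ax_mulZl HA) ?(ax_mulZr HA).
by rewrite !(ax_scD HA) -!(ax_scM HA) mulrC.
Qed.
Lemma leibniz_at_scr k a b : leibniz_at a b -> leibniz_at a (sc k b).
Proof.
rewrite /leibniz_at /leibniz_rhs => h; rewrite (ax_mulZr HA) DZ h DZ !(ax_mulZr HA) ?(ax_mulZl HA).
by rewrite !(ax_scD HA) -!(ax_scM HA) mulrC.
Qed.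
Lemma leibniz_at_addl a a' b : leibniz_at a b -> leibniz_at a' b -> leibniz_at (ad a a') b.
Proof.
rewrite /leibniz_at /leibniz_rhs => h h'.
rewrite (ax_mulDl HA) DD h h' DD !(ax_mulDl HA) ?(ax_mulDr HA).
by rewrite (ax_scD HA) ld_addACA (ld_addACA (mu (D a) b)).
Qed.
Lemma leibniz_at_addr a b b' : leibniz_at a b -> leibniz_at a b' -> leibniz_at a (ad b b').
Proof.
rewrite /leibniz_at /leibniz_rhs => h h'.
rewrite (ax_mulDr HA) DD h h' DD !(ax_mulDr HA) ?(ax_mulDl HA).
by rewrite (ax_scD HA) ld_addACA (ld_addACA (mu (D a) b)).
Qed.

Lemma leibniz_from_spanning (I : Type) (b : I -> A) :
  (forall a, exists l, a = lincomb b l) -> (forall u v, leibniz_at (b u) (b v)) ->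
  forall a c, leibniz_at a c.
Proof.
move=> hsp hb.
have hr : forall u c, leibniz_at (b u) c.
  move=> u c; have [l ->] := hsp c; elim: l => [|t l IH] /=; first exact: leibniz_at_zr.
  by apply: leibniz_at_addr => //; apply: leibniz_at_scr.
move=> a c; have [l ->] := hsp a; elim: l => [|t l IH] /=; first exact: leibniz_at_zl.
by apply: leibniz_at_addl => //; apply: leibniz_at_scl.
Qed.
End Leibniz.

End AlgebraAxioms.

Section CoefficientFunctions.
Variables (K : comPzRingType) (X : Type).
Local Notation W := (word X).
Local Notation V := (W -> K).
Implicit Types (f g h : V) (u v w : W).

Definition fsum (I : Type) (s : seq I) (F : I -> V) : V := fun w => \sum_(i <- s) F i w.

Lemma wcatA u v w : wcat u (wcat v w) = wcat (wcat u v) w.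
Proof. by rewrite /wcat /= -catA. Qed.

Lemma mem_splits w (p : W * W) : (p \in splits w) = (wcat p.1 p.2 == w).
Proof.
case: w => a s; case: p => [[b t] [c r]] /=.
apply/mapP/eqP => [[i]|].
  rewrite mem_iota add0n => /andP[_ hi] [-> -> -> ->].
  by rewrite /wcat /= -(drop_nth a hi) cat_take_drop.
move=> [<- <-]; exists (size t).
  by rewrite mem_iota /= size_cat /= addnS ltnS leq_addr.
rewrite take_size_cat // nth_cat ltnn subnn /= drop_cat ltnNge leqnSn /=.
by rewrite subSnn drop1.
Qed.

Lemma splits_uniq w : uniq (splits w).
Proof.
case: w => a s; apply: (@map_uniq _ _ (fun p : W * W => size p.1.2)).
rewrite /splits -map_comp.
have -> : [seq ((fun p : W * W => size p.1.2) \o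
      (fun i => ((a, s).1, take i (a, s).2, (nth (a, s).1 (a, s).2 i, drop i.+1 (a, s).2)))) i
       | i <- iota 0 (size (a, s).2)] = iota 0 (size s).
  rewrite -[RHS]map_id; apply/eq_in_map => i; rewrite mem_iota add0n => /andP[_ hi].
  by rewrite /= size_takel // ltnW.
exact: iota_uniq.
Qed.

Lemma pwordE u w : pword K u w = (w == u)%:R.
Proof.
rewrite /pword; case: excluded_middle_informative => h /=; first by rewrite h eqxx.
by case: eqP.
Qed.

Lemma sum_indicator (T : eqType) (s : seq T) (x : T) :
  uniq s -> \sum_(p <- s) ((p == x)%:R : K) = (x \in s)%:R.
Proof.
elim: s => [|y s IH] /=; first by rewrite big_nil.
case/andP => hy hs; rewrite big_cons IH // in_cons eq_sym.
by case: eqP => [->|] /=; rewrite ?(negbTE hy) ?addr0 ?add0r.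
Qed.

Lemma pmul_pword u v : pmul (pword K u) (pword K v) = pword K (wcat u v).
Proof.
apply: functional_extensionality => w; rewrite /pmul pwordE.
have -> : \sum_(p <- splits w) pword K u p.1 * pword K v p.2 =
          \sum_(p <- splits w) ((p == (u, v))%:R : K).
  apply: eq_bigr => p _; rewrite !pwordE -natrM mulnb.
  by case: p => p1 p2; rewrite xpair_eqE.
by rewrite sum_indicator ?splits_uniq // mem_splits /= eq_sym.
Qed.

(* Both iterated sums in associativity run over the factorisations
   w = a b c, enumerated in two different orders. *)
Lemma pmul_assoc f g h : pmul f (pmul g h) = pmul (pmul f g) h.
Proof.
apply: functional_extensionality => w; rewrite /pmul.
pose L1 := [seq (p.1, q.1, q.2) | p <- splits w, q <- splits p.2].
pose L2 := [seq (q.1, q.2, p.2) | p <- splits w, q <- splits p.1].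
have e1 : \sum_(p <- splits w) f p.1 * (\sum_(q <- splits p.2) g q.1 * h q.2) =
          \sum_(e <- L1) f e.1.1 * (g e.1.2 * h e.2).
  by rewrite big_allpairs_dep; apply: eq_bigr => p _; rewrite mulr_sumr.
have e2 : \sum_(p <- splits w) (\sum_(q <- splits p.1) f q.1 * g q.2) * h p.2 =
          \sum_(e <- L2) f e.1.1 * (g e.1.2 * h e.2).
  rewrite big_allpairs_dep; apply: eq_bigr => p _; rewrite mulr_suml.
  by apply: eq_bigr => q _; rewrite mulrA.
rewrite e1 e2; apply: perm_big; apply: uniq_perm.
- apply: uniq_flatten_map; first exact: splits_uniq.
  + move=> p _; rewrite map_inj_uniq ?splits_uniq //.
    by move=> [q1 q2] [r1 r2] /= [-> ->].
  + move=> p p' e; rewrite !mem_splits => /eqP hp /eqP hp' /mapP[q hq ->] /mapP[q' hq' []].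
    move: hq hq'; rewrite !mem_splits => /eqP hq /eqP hq' e1' e2' e3'.
    case: p p' hp hp' hq hq' e1' => [p1 p2] [p1' p2'] /= hp hp' hq hq' e1'.
    by rewrite e1' -hq -hq' e2' e3'.
- apply: uniq_flatten_map; first exact: splits_uniq.
  + move=> p _; rewrite map_inj_uniq ?splits_uniq //.
    by move=> [q1 q2] [r1 r2] /= [-> ->].
  + move=> p p' e; rewrite !mem_splits => /eqP hp /eqP hp' /mapP[q hq ->] /mapP[q' hq' []].
    move: hq hq'; rewrite !mem_splits => /eqP hq /eqP hq' e1' e2' e3'.
    case: p p' hp hp' hq hq' e3' => [p1 p2] [p1' p2'] /= hp hp' hq hq' e3'.
    by rewrite e3' -hq -hq' e1' e2'.
- move=> [[a b] c]; apply/allpairsPdep/allpairsPdep.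
  + move=> [p [q [hp hq [-> -> ->]]]]; exists (wcat p.1 q.1, q.2), (p.1, q.1).
    move: hp hq; rewrite !mem_splits => /eqP hp /eqP hq; split => //.
    by rewrite /= -wcatA hq hp.
  + move=> [p [q [hp hq [-> -> ->]]]]; exists (q.1, wcat q.2 p.2), (q.2, p.2).
    move: hp hq; rewrite !mem_splits => /eqP hp /eqP hq; split => //.
    by rewrite /= wcatA hq hp.
Qed.

Lemma fsum_nil (I : Type) (F : I -> V) : fsum [::] F = @pzero K X.
Proof. by apply: functional_extensionality => w; rewrite /fsum big_nil. Qed.
Lemma fsum_cons (I : Type) i s (F : I -> V) : fsum (i :: s) F = padd (F i) (fsum s F).
Proof. by apply: functional_extensionality => w; rewrite /fsum big_cons. Qed.
Lemma fsum_cat (I : Type) s1 s2 (F : I -> V) : fsum (s1 ++ s2) F = padd (fsum s1 F) (fsum s2 F).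
Proof. by apply: functional_extensionality => w; rewrite /fsum big_cat. Qed.
Lemma fsum_map (I J : Type) (g : I -> J) s (F : J -> V) :
  fsum (map g s) F = fsum s (fun i => F (g i)).
Proof. by apply: functional_extensionality => w; rewrite /fsum big_map. Qed.

Lemma pmul_fsuml (I : Type) s (F : I -> V) g :
  pmul (fsum s F) g = fsum s (fun i => pmul (F i) g).
Proof.
apply: functional_extensionality => w; rewrite /pmul /fsum.
by rewrite (exchange_big_dep xpredT) //=; apply: eq_bigr => p _; rewrite mulr_suml.
Qed.
Lemma pmul_fsumr (I : Type) s (F : I -> V) g :
  pmul g (fsum s F) = fsum s (fun i => pmul g (F i)).
Proof.
apply: functional_extensionality => w; rewrite /pmul /fsum.
by rewrite (exchange_big_dep xpredT) //=; apply: eq_bigr => p _; rewrite mulr_sumr.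
Qed.
Lemma pD_fsum (I : Type) s (F : I -> V) : pD (fsum s F) = fsum s (fun i => pD (F i)).
Proof.
by apply: functional_extensionality => -[[x|a t] [|c r]]; rewrite /pD /fsum //= big1.
Qed.
Lemma pscale_fsum (I : Type) k s (F : I -> V) :
  pscale k (fsum s F) = fsum s (fun i => pscale k (F i)).
Proof. by apply: functional_extensionality => w; rewrite /pscale /fsum mulr_sumr. Qed.

Lemma pmulDl f g h : pmul (padd f g) h = padd (pmul f h) (pmul g h).
Proof.
apply: functional_extensionality => w; rewrite /pmul /padd -big_split /=.
by apply: eq_bigr => p _; rewrite mulrDl.
Qed.
Lemma pmulDr f g h : pmul h (padd f g) = padd (pmul h f) (pmul h g).
Proof.
apply: functional_extensionality => w; rewrite /pmul /padd -big_split /=.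
by apply: eq_bigr => p _; rewrite mulrDr.
Qed.
Lemma pmulZl k f g : pmul (pscale k f) g = pscale k (pmul f g).
Proof.
apply: functional_extensionality => w; rewrite /pmul /pscale mulr_sumr.
by apply: eq_bigr => p _; rewrite mulrA.
Qed.
Lemma pmulZr k f g : pmul f (pscale k g) = pscale k (pmul f g).
Proof.
apply: functional_extensionality => w; rewrite /pmul /pscale mulr_sumr.
by apply: eq_bigr => p _; rewrite mulrCA.
Qed.
Lemma pDD f g : pD (padd f g) = padd (pD f) (pD g).
Proof. by apply: functional_extensionality => -[[x|a t] [|c r]]; rewrite /pD /padd ?addr0. Qed.
Lemma pDZ k f : pD (pscale k f) = pscale k (pD f).
Proof. by apply: functional_extensionality => -[[x|a t] [|c r]]; rewrite /pD /pscale ?mulr0. Qed.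

Lemma pD_pword u : pD (pword K u) = pword K (LD u.1 u.2, [::]).
Proof.
apply: functional_extensionality => -[a t]; rewrite /pD.
case: a => [x|b r]; case: t => [|c t]; rewrite /= ?pwordE; try by case: eqP.
case: u => u1 u2 /=.
have -> : (((LD b r, [::]) : W) == (LD u1 u2, [::])) = (((b, r) : W) == (u1, u2)).
  by apply/idP/idP => /eqP [-> ->].
by [].
Qed.

Definition Vops : ldalg_ops K :=
  @LDOps K V (@pzero K X) (@padd K X) (@popp K X) (@pscale K X) (@pmul K X) (@pD K X).

Lemma Vops_kalgebra : kalgebra Vops.
Proof.
constructor => /=; try (by move=> *; apply: functional_extensionality => w;
  rewrite /padd /popp /pscale /pzero ?addrA ?add0r ?addNr ?mulrDr ?mulrDl ?mulrA ?mul1r).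
- by move=> *; apply: functional_extensionality => w; rewrite /padd addrC.
- exact: pmul_assoc.
- by move=> *; exact: pmulDr.
- exact: pmulDl.
- exact: pmulZl.
- exact: pmulZr.
Qed.

Definition supp f : seq W :=
  match excluded_middle_informative (fsupp f) with
  | left H => undup (proj1_sig (constructive_indefinite_description _ H))
  | right _ => [::]
  end.

Lemma supp_spec f : fsupp f -> uniq (supp f) /\ (forall w, w \notin supp f -> f w = 0).
Proof.
rewrite /supp => Hf; case: excluded_middle_informative => // H; split; first exact: undup_uniq.
case: constructive_indefinite_description => s hs /= w; rewrite mem_undup => hw.
by apply: hs => /mem_In; rewrite (negbTE hw).
Qed.

Lemma fsuppP f (s : seq W) : (forall w, w \notin s -> f w = 0) -> fsupp f.
Proof. by move=> h; exists s => w hw; apply: h; apply/negP => /mem_In. Qed.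

Lemma fsuppE f : fsupp f -> exists s : seq W, forall w, w \notin s -> f w = 0.
Proof. by move=> /supp_spec [_ h]; exists (supp f). Qed.

Lemma expand f : fsupp f -> f = fsum (supp f) (fun u => pscale (f u) (pword K u)).
Proof.
move=> /supp_spec [hu hz]; apply: functional_extensionality => w; rewrite /fsum /pscale.
case hw: (w \in supp f).
  rewrite (bigD1_seq w) //= pwordE eqxx mulr1 big1 ?addr0 // => u /negbTE hu'.
  by rewrite pwordE eq_sym hu' mulr0.
rewrite hz ?hw // big1_seq // => u /andP[_ hus]; rewrite pwordE.
case: eqP => [e|_]; last by rewrite mulr0.
by move: hw; rewrite e hus.
Qed.

Lemma fsupp_pword u : fsupp (pword K u).
Proof. by apply: (@fsuppP _ [:: u]) => w; rewrite in_cons orbF pwordE => /negbTE ->. Qed.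
Lemma fsupp_padd f g : fsupp f -> fsupp g -> fsupp (padd f g).
Proof.
move=> /fsuppE[s1 h1] /fsuppE[s2 h2]; apply: (@fsuppP _ (s1 ++ s2)) => w.
by rewrite mem_cat negb_or => /andP[/h1 e1 /h2 e2]; rewrite /padd e1 e2 addr0.
Qed.
Lemma fsupp_popp f : fsupp f -> fsupp (popp f).
Proof. by move=> /fsuppE[s h]; apply: (@fsuppP _ s) => w /h; rewrite /popp => ->; rewrite oppr0. Qed.
Lemma fsupp_pscale k f : fsupp f -> fsupp (pscale k f).
Proof. by move=> /fsuppE[s h]; apply: (@fsuppP _ s) => w /h; rewrite /pscale => ->; rewrite mulr0. Qed.
Lemma fsupp_pD f : fsupp f -> fsupp (pD f).
Proof.
move=> /fsuppE[s h]; apply: (@fsuppP _ [seq (LD u.1 u.2, [::]) | u <- s]).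
move=> [[x|a t] [|c r]] //= hw; apply: h; apply: contra hw => hat.
by apply/mapP; exists (a, t).
Qed.
Lemma fsupp_pmul f g : fsupp f -> fsupp g -> fsupp (pmul f g).
Proof.
move=> /fsuppE[s1 h1] /fsuppE[s2 h2].
apply: (@fsuppP _ [seq wcat u v | u <- s1, v <- s2]) => w hw.
rewrite /pmul big1_seq // => p /andP[_]; rewrite mem_splits => /eqP hp.
case h1p: (p.1 \in s1); last by rewrite h1 ?h1p ?mul0r.
case h2p: (p.2 \in s2); last by rewrite (h2 p.2) ?h2p ?mulr0.
by move: hw; rewrite -hp allpairs_f.
Qed.
Lemma fsupp_fsum (I : Type) s (F : I -> V) : (forall i, fsupp (F i)) -> fsupp (fsum s F).
Proof.
move=> h; elim: s => [|i s IH]; first by rewrite fsum_nil; exact: fsupp_pzero.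
by rewrite fsum_cons; apply: fsupp_padd.
Qed.

End CoefficientFunctions.

Ltac solve_fsupp := repeat first [ apply: fsupp_padd | apply: fsupp_popp | apply: fsupp_pscale
  | apply: fsupp_pmul | apply: fsupp_pD | apply: fsupp_pword | apply: fsupp_pzero | assumption ].

Section Transfer.
Variables (K : comPzRingType) (T1 T2 : ldalg_ops K) (P : T1 -> Prop) (p : T1 -> T2).
Hypothesis H1 : kalgebra T1.
Hypotheses (P0 : P (ld_zero T1)) (Padd : forall a b, P a -> P b -> P (ld_add a b))
  (Popp : forall a, P a -> P (ld_opp a)) (Psc : forall k a, P a -> P (ld_scale k a))
  (Pmul : forall a b, P a -> P b -> P (ld_mul a b)).
Hypothesis surj : forall y, exists x, P x /\ y = p x.
Hypotheses (p0 : p (ld_zero T1) = ld_zero T2)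
  (padd_ : forall a b, P a -> P b -> p (ld_add a b) = ld_add (p a) (p b))
  (popp_ : forall a, P a -> p (ld_opp a) = ld_opp (p a))
  (psc_ : forall k a, P a -> p (ld_scale k a) = ld_scale k (p a))
  (pmul_ : forall a b, P a -> P b -> p (ld_mul a b) = ld_mul (p a) (p b)).

Local Ltac solP :=
  repeat first [assumption | apply: Padd | apply: Popp | apply: Psc | apply: Pmul | apply: P0].
Local Ltac pull y := let x := fresh "x" in let hx := fresh "hx" in case: (surj y) => [x [hx ->]].

Lemma kalgebra_transfer : kalgebra T2.
Proof.
constructor.
- move=> a b c; pull a; pull b; pull c; rewrite -!padd_; solP; by rewrite (ax_addA H1).
- move=> a b; pull a; pull b; rewrite -!padd_; solP; by rewrite (ax_addC H1).
- move=> a; pull a; rewrite -p0 -?padd_; solP; by rewrite (ax_add0 H1).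
- move=> a; pull a; rewrite -p0 -?popp_ -?padd_; solP; by rewrite (ax_addN H1).
- move=> k a b; pull a; pull b; rewrite -?padd_ -?psc_ -?padd_; solP; by rewrite (ax_scD H1).
- move=> k l a; pull a; rewrite -!psc_ -?padd_; solP; by rewrite (ax_scDl H1).
- move=> k l a; pull a; rewrite -!psc_; solP; by rewrite (ax_scM H1).
- move=> a; pull a; rewrite -!psc_; solP; by rewrite (ax_sc1 H1).
- move=> a b c; pull a; pull b; pull c; rewrite -!pmul_; solP; by rewrite (ax_mulA H1).
- move=> a b c; pull a; pull b; pull c; rewrite -?padd_ -?pmul_ -?padd_; solP.
  by rewrite (ax_mulDr H1).
- move=> a b c; pull a; pull b; pull c; rewrite -?padd_ -?pmul_ -?padd_; solP.
  by rewrite (ax_mulDl H1).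
- move=> k a b; pull a; pull b; rewrite -?psc_ -?pmul_ -?psc_; solP; by rewrite (ax_mulZl H1).
- move=> k a b; pull a; pull b; rewrite -?psc_ -?pmul_ -?psc_; solP; by rewrite (ax_mulZr H1).
Qed.

Hypotheses (PD : forall a, P a -> P (ld_D a)) (pD_ : forall a, P a -> p (ld_D a) = ld_D (p a)).

Lemma D_linear_transfer :
  (forall a b : T1, P a -> P b -> ld_D (ld_add a b) = ld_add (ld_D a) (ld_D b)) ->
  (forall k (a : T1), P a -> ld_D (ld_scale k a) = ld_scale k (ld_D a)) ->
  (forall a b : T2, ld_D (ld_add a b) = ld_add (ld_D a) (ld_D b)) /\
  (forall k (a : T2), ld_D (ld_scale k a) = ld_scale k (ld_D a)).
Proof.
move=> hD hZ; split.
- move=> a b; pull a; pull b.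
  by rewrite -padd_ // -(pD_ (Padd hx hx0)) hD // (padd_ (PD hx) (PD hx0)) !pD_.
- move=> k a; pull a.
  by rewrite -psc_ // -(pD_ (Psc k hx)) hZ // (psc_ k (PD hx)) !pD_.
Qed.
End Transfer.

Section LinearExtension.
Variables (K : comPzRingType) (T : ldalg_ops K).
Hypothesis HT : kalgebra T.
Local Notation z := (ld_zero T).
Local Notation ad := (@ld_add K T).
Local Notation sc := (@ld_scale K T).

Variables (X : Type) (ev : word X -> T).
Local Notation W := (word X).

Definition linext (f : W -> K) : T := \big[ad/z]_(u <- supp f) sc (f u) (ev u).

Lemma linextE (f : W -> K) (s : seq W) : (forall w, w \notin s -> f w = 0) ->
  linext f = \big[ad/z]_(u <- undup s) sc (f u) (ev u).
Proof.
move=> hs; have [hu h0] := supp_spec (fsuppP hs).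
apply: (ld_sum_eq_common HT hu (undup_uniq s)) => u.
- by move=> _; rewrite mem_undup => /hs ->; rewrite (ld_scale0 HT).
- by move=> _ /h0 ->; rewrite (ld_scale0 HT).
Qed.

Lemma linext_add f g : fsupp f -> fsupp g -> linext (padd f g) = ad (linext f) (linext g).
Proof.
move=> /supp_spec[_ h1] /supp_spec[_ h2].
rewrite !(@linextE _ (supp f ++ supp g)) -?(ld_sum_split HT) /=.
- by apply: eq_bigr => u _; rewrite /padd (ax_scDl HT).
- by move=> w; rewrite mem_cat negb_or => /andP[_ /h2 ->].
- by move=> w; rewrite mem_cat negb_or => /andP[/h1 -> _].
- by move=> w; rewrite mem_cat negb_or => /andP[/h1 e1 /h2 e2]; rewrite /padd e1 e2 addr0.
Qed.

Lemma linext_scale k f : fsupp f -> linext (pscale k f) = sc k (linext f).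
Proof.
move=> /supp_spec[hu h0].
rewrite (@linextE _ (supp f)) => [|w /h0]; last by rewrite /pscale => ->; rewrite mulr0.
rewrite undup_id // /linext (ld_scale_sum HT); apply: eq_bigr => u _.
by rewrite /pscale (ax_scM HT).
Qed.

Lemma linext_zero : linext (@pzero K X) = z.
Proof. by rewrite (@linextE _ [::]) // big_nil. Qed.

Lemma linext_pword u : linext (pword K u) = ev u.
Proof.
rewrite (@linextE _ [:: u]) => [|w]; last by rewrite in_cons orbF pwordE => /negbTE ->.
by rewrite /= big_cons big_nil pwordE eqxx (ax_sc1 HT) (ld_addr0 HT).
Qed.

Lemma linext_fsum (I : Type) (s : seq I) (c : I -> K) (F : I -> W -> K) :
  (forall i, fsupp (F i)) ->
  linext (fsum s (fun i => pscale (c i) (F i))) = \big[ad/z]_(i <- s) sc (c i) (linext (F i)).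
Proof.
move=> hF; elim: s => [|i s IH]; first by rewrite fsum_nil big_nil linext_zero.
rewrite fsum_cons big_cons linext_add ?linext_scale ?IH //; first exact: fsupp_pscale.
by apply: fsupp_fsum => j; apply: fsupp_pscale.
Qed.

Lemma linext_popp f : fsupp f -> linext (popp f) = ld_opp (linext f).
Proof.
move=> hf; have -> : popp f = pscale (-1) f.
  by apply: functional_extensionality => w; rewrite /popp /pscale mulN1r.
by rewrite linext_scale // (ld_oppE HT).
Qed.
End LinearExtension.

Section WordInduction.
Variable X : Type.

Fixpoint letter_size (a : letter X) : nat :=
  match a with Lx _ => 1 | LD b s => (letter_size b + sumn (map letter_size s)).+1 end.

Lemma word_ind (P : word X -> Prop) :
  (forall x, P (Lx x, [::])) -> (forall b s, P (b, s) -> P (LD b s, [::])) ->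
  (forall a c s, P (a, [::]) -> P (c, s) -> P (a, c :: s)) -> forall w, P w.
Proof.
move=> hx hD hcons w.
suff H : forall n (w : word X),
    (letter_size w.1 + sumn (map letter_size w.2) < n)%N -> P w.
  exact: (H _ w (ltnSn _)).
elim=> [|n IH] [a s] //=.
case: s => [|c s] /= hlt.
  case: a hlt => [x|b t] hlt; first exact: hx.
  by apply: hD; apply: IH; move: hlt; rewrite /= addn0 ltnS.
have p1 : (0 < letter_size a)%N by case: a {hlt}.
have p2 : (0 < letter_size c)%N by case: c {hlt}.
by apply: hcons; apply: IH => /=; move: hlt p1 p2; rewrite -!plusE => /ltP ? /ltP ? /ltP ?;
  apply/ltP; lia.
Qed.
End WordInduction.

(* Evaluation of words in an algebra B, given the images of the letters of X:
   letters D(w) are sent to D applied to the evaluation of w.  evL inlines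
   the evaluation of the word inside D(w) so that the recursion is structural. *)
Section Evaluation.
Variables (K : comPzRingType) (X : Type) (B : ldalg_ops K) (f0 : X -> B).

Fixpoint evL (a : letter X) : B :=
  match a with
  | Lx x => f0 x
  | LD b s => ld_D ((fix go (x : B) (t : seq (letter X)) : B :=
                      match t with [::] => x | d :: t' => ld_mul x (go (evL d) t') end) (evL b) s)
  end.
Fixpoint evS (x : B) (t : seq (letter X)) : B :=
  match t with [::] => x | d :: t' => ld_mul x (evS (evL d) t') end.
Definition evW (w : word X) : B := evS (evL w.1) w.2.
End Evaluation.

Section EvaluationMorphism.
Variables (K : comPzRingType) (lam : K) (X : Type) (B : ldalg_ops K) (f0 : X -> B).
Hypothesis HB : is_ldalg lam B.
Let HA := ldalg_kalgebra HB.
Let HD := ldalg_D_laws HB.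
Local Notation ev := (evW f0).
Local Notation z := (ld_zero B).
Local Notation mu := (@ld_mul K B).
Local Notation D := (@ld_D K B).
Local Notation evlin := (linext ev).

Lemma evW_cat u v : ev (wcat u v) = mu (ev u) (ev v).
Proof.
case: u => a s; case: v => b t; rewrite /evW /wcat /=.
by elim: s (evL f0 a) => [|c s IH] x //=; rewrite IH (ax_mulA HA).
Qed.

(* By bilinearity the multiplicativity reduces to basis words, where it is evW_cat. *)
Lemma evlin_mul (f g : word X -> K) : fsupp f -> fsupp g -> evlin (pmul f g) = mu (evlin f) (evlin g).
Proof.
move=> hf hg.
have word_left u : evlin (pmul (pword K u) g) = mu (ev u) (evlin g).
  rewrite {1}(expand hg) pmul_fsumr.
  have -> : (fun v => pmul (pword K u) (pscale (g v) (pword K v))) =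
            (fun v => pscale (g v) (pword K (wcat u v))).
    by apply: functional_extensionality => v; rewrite pmulZr pmul_pword.
  rewrite (linext_fsum HA) => [|v]; last exact: fsupp_pword.
  rewrite [linext _ g]/linext (ld_mul_sumr HA); apply: eq_bigr => v _.
  by rewrite (linext_pword HA) evW_cat (ax_mulZr HA).
rewrite {1}(expand hf) pmul_fsuml.
have -> : (fun u => pmul (pscale (f u) (pword K u)) g) =
          (fun u => pscale (f u) (pmul (pword K u) g)).
  by apply: functional_extensionality => u; rewrite pmulZl.
rewrite (linext_fsum HA) => [|u]; last by solve_fsupp.
rewrite [linext _ f]/linext (ld_mul_suml HA); apply: eq_bigr => u _.
by rewrite word_left (ax_mulZl HA).
Qed.

Lemma evlin_D (f : word X -> K) : fsupp f -> evlin (pD f) = D (evlin f).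
Proof.
move=> hf; rewrite {1}(expand hf) pD_fsum.
have -> : (fun u => pD (pscale (f u) (pword K u))) =
          (fun u => pscale (f u) (pword K (LD u.1 u.2, [::]))).
  by apply: functional_extensionality => u; rewrite pDZ pD_pword.
rewrite (linext_fsum HA) => [|u]; last exact: fsupp_pword.
have [hDD [hDZ _]] := HD.
rewrite [linext _ f]/linext (ld_D_sum HA hDD hDZ); apply: eq_bigr => u _.
by rewrite (linext_pword HA) hDZ; case: u.
Qed.

Fixpoint ctx_eval (c : ctx X) (x : B) : B :=
  match c with
  | Hole => x
  | CLmul u c' => mu (ev u) (ctx_eval c' x)
  | CRmul c' u => mu (ctx_eval c' x) (ev u)
  | CDop c' => D (ctx_eval c' x)
  end.

Lemma fsupp_subst (c : ctx X) (s : word X -> K) : fsupp s -> fsupp (subst c s).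
Proof. by move=> hs; elim: c => [|u c IH|c IH u|c IH] /=; solve_fsupp. Qed.

Lemma evlin_subst (c : ctx X) (s : word X -> K) : fsupp s -> evlin (subst c s) = ctx_eval c (evlin s).
Proof.
move=> hs; elim: c => [|u c IH|c IH u|c IH] //=; have h := fsupp_subst c hs.
- by rewrite evlin_mul ?IH ?(linext_pword HA) //; solve_fsupp.
- by rewrite evlin_mul ?IH ?(linext_pword HA) //; solve_fsupp.
- by rewrite evlin_D ?IH.
Qed.

Lemma ctx_eval_zero (c : ctx X) : ctx_eval c z = z.
Proof.
have [hDD [hDZ _]] := HD.
by elim: c => [|u c IH|c IH u|c IH] //=; rewrite IH ?(ld_mulz HA) ?(ld_zmul HA) ?(ld_Dz HA hDZ).
Qed.

Lemma fsupp_Selt (u v : word X) : fsupp (Selt lam u v).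
Proof. rewrite /Selt; solve_fsupp. Qed.

(* The generators of S evaluate to zero: this is the lambda-Leibniz rule in B. *)
Lemma evlin_Selt (u v : word X) : evlin (Selt lam u v) = z.
Proof.
have [hDD [hDZ hL]] := HD.
rewrite /Selt (linext_add HA) ?(linext_popp HA) ?(linext_add HA) ?(linext_add HA)
  ?(linext_scale HA); try by solve_fsupp.
rewrite !evlin_mul ?evlin_D ?(linext_pword HA) ?evW_cat; try by solve_fsupp.
by rewrite hL (ld_addrN HA).
Qed.

Lemma evlin_IdS (e : word X -> K) : inIdS lam e -> evlin e = z.
Proof.
case=> l ->.
have -> : (fun w => \sum_(t <- l) t.1.1 * subst t.1.2 (Selt lam t.2.1 t.2.2) w) =
          fsum l (fun t => pscale t.1.1 (subst t.1.2 (Selt lam t.2.1 t.2.2))) by [].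
rewrite (linext_fsum HA) => [|t]; last by apply: fsupp_subst; apply: fsupp_Selt.
apply: (ld_sum_zero HA) => t.
rewrite evlin_subst; last exact: fsupp_Selt.
by rewrite evlin_Selt ctx_eval_zero (ld_scalez HA).
Qed.

Lemma evlin_cong (f g : word X -> K) :
  fsupp f -> fsupp g -> inIdS lam (padd f (popp g)) -> evlin f = evlin g.
Proof.
move=> hf hg hI.
have -> : f = padd (padd f (popp g)) g.
  by apply: functional_extensionality => w; rewrite /padd /popp addrNK.
rewrite (linext_add HA); try by solve_fsupp.
by rewrite evlin_IdS // (ax_add0 HA).
Qed.
End EvaluationMorphism.

Lemma is_Dword_cat (X : Type) (u v : word X) : is_Dword u -> is_Dword v -> is_Dword (wcat u v).
Proof.
case: u => a s; case: v => c t; rewrite /is_Dword /wcat /= => /andP[-> hs] /andP[hc ht].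
by rewrite all_cat hs /= hc ht.
Qed.

Section DwordSpan.
Variables (K : comPzRingType) (lam : K) (X : Type) (A : ldalg_ops K).
Hypothesis HL : is_ldalg lam A.
Let HA := ldalg_kalgebra HL.
Let HD := ldalg_D_laws HL.
Variable b : word X -> A.
Hypothesis b_cat : forall u v, b (wcat u v) = ld_mul (b u) (b v).
Hypothesis b_D : forall a s, b (LD a s, [::]) = ld_D (b (a, s)).

Definition in_Dspan (q : A) := exists l : seq (K * word X),
  (forall t, List.In t l -> is_Dword t.2) /\ q = lincomb b l.

Lemma in_Dspan_zero : in_Dspan (ld_zero A). Proof. by exists [::]. Qed.

Lemma in_Dspan_add x y : in_Dspan x -> in_Dspan y -> in_Dspan (ld_add x y).
Proof.
move=> [l1 [h1 ->]] [l2 [h2 ->]]; exists (l1 ++ l2); split; last by rewrite (lincomb_cat HA).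
by move=> t /List.in_app_iff [/h1|/h2].
Qed.

Lemma in_Dspan_scale k x : in_Dspan x -> in_Dspan (ld_scale k x).
Proof.
move=> [l [h ->]]; exists [seq (k * t.1, t.2) | t <- l]; split.
  by move=> t /List.in_map_iff [t' [<- /h]].
elim: l {h} => [|t l IH] /=; first exact: (ld_scalez HA).
by rewrite (ax_scD HA) IH (ax_scM HA).
Qed.

Lemma in_Dspan_Dword (w : word X) : is_Dword w -> in_Dspan (b w).
Proof.
move=> hw; exists [:: (1, w)]; split; first by move=> t [<-|].
by rewrite /= (ax_sc1 HA) (ld_addr0 HA).
Qed.

(* The span is closed under products, since D-words are closed under concatenation. *)
Lemma in_Dspan_mul x y : in_Dspan x -> in_Dspan y -> in_Dspan (ld_mul x y).
Proof.
move=> [l1 [h1 ->]] hy.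
have hw w : is_Dword w -> in_Dspan (ld_mul (b w) y).
  move=> hw; case: hy => l2 [h2 ->]; elim: l2 h2 => [|t l IH] h2 /=.
    by rewrite (ld_mulz HA); exact: in_Dspan_zero.
  rewrite (ax_mulDr HA) (ax_mulZr HA) -b_cat; apply: in_Dspan_add.
    by apply: in_Dspan_scale; apply: in_Dspan_Dword; apply: is_Dword_cat => //; apply: h2; left.
  by apply: IH => t' ht'; apply: h2; right.
elim: l1 h1 => [|t l IH] h1 /=; first by rewrite (ld_zmul HA); exact: in_Dspan_zero.
rewrite (ax_mulDl HA) (ax_mulZl HA); apply: in_Dspan_add.
  by apply: in_Dspan_scale; apply: hw; apply: h1; left.
by apply: IH => t' ht'; apply: h1; right.
Qed.

(* D of a D-word a c s expands by the lambda-Leibniz rule into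
   D(a) (c s) + a D(c s) + lam D(a) D(c s), with D(a) a D^omega-letter. *)
Lemma in_Dspan_D_Dword (w : word X) : is_Dword w -> in_Dspan (ld_D (b w)).
Proof.
have [_ [_ hL]] := HD.
case: w => a s; rewrite /is_Dword /= => /andP[ha hs].
have hDa : in_Dspan (ld_D (b (a, [::]))).
  by rewrite -b_D; apply: in_Dspan_Dword; rewrite /is_Dword /= ha.
have hb_a : in_Dspan (b (a, [::])) by apply: in_Dspan_Dword; rewrite /is_Dword /= ha.
elim: s a ha hs hDa hb_a => [|c s IH] a ha hs hDa hb_a //.
move: hs => /= /andP[hc hs].
have hDcs : in_Dspan (ld_D (b (c, s))).
  apply: IH => //; last by apply: in_Dspan_Dword; rewrite /is_Dword /= hc.
  by rewrite -b_D; apply: in_Dspan_Dword; rewrite /is_Dword /= hc.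
have -> : b (a, c :: s) = ld_mul (b (a, [::])) (b (c, s)) by rewrite -b_cat.
rewrite hL /leibniz_rhs; apply: in_Dspan_add; first apply: in_Dspan_add.
- by apply: in_Dspan_mul => //; apply: in_Dspan_Dword; rewrite /is_Dword /= hc hs.
- exact: in_Dspan_mul.
- by apply: in_Dspan_scale; apply: in_Dspan_mul.
Qed.

Lemma in_Dspan_D x : in_Dspan x -> in_Dspan (ld_D x).
Proof.
have [hDD [hDZ _]] := HD.
move=> [l [h ->]]; elim: l h => [|t l IH] h /=.
  by rewrite (ld_Dz HA hDZ); exact: in_Dspan_zero.
rewrite hDD hDZ; apply: in_Dspan_add; last by apply: IH => t' ht'; apply: h; right.
by apply: in_Dspan_scale; apply: in_Dspan_D_Dword; apply: h; left.
Qed.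

Lemma in_Dspan_word (w : word X) : in_Dspan (b w).
Proof.
elim/word_ind: w => [x|c s IH|a c s IH1 IH2].
- exact: in_Dspan_Dword.
- by rewrite b_D; apply: in_Dspan_D.
- have -> : (a, c :: s) = wcat (a, [::]) (c, s) by [].
  by rewrite b_cat; apply: in_Dspan_mul.
Qed.

Lemma in_Dspan_lincomb (l : seq (K * word X)) : in_Dspan (lincomb b l).
Proof.
elim: l => [|t l IH] /=; first exact: in_Dspan_zero.
by apply: in_Dspan_add => //; apply: in_Dspan_scale; apply: in_Dspan_word.
Qed.
End DwordSpan.

Section Quotient.
Variables (K : comPzRingType) (lam : K) (X : Type).
Local Notation W := (word X).
Local Notation V := (W -> K).
Local Notation Q := (Qops X lam).
Implicit Types (f g h e : V) (u v : W).

Definition ideal_comb (l : seq (K * ctx X * (W * W))) : V :=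
  fsum l (fun t => pscale t.1.1 (subst t.1.2 (Selt lam t.2.1 t.2.2))).

Lemma inIdS_zero : inIdS lam (@pzero K X).
Proof. by exists [::]; rewrite -[RHS]/(ideal_comb [::]) /ideal_comb fsum_nil. Qed.

Lemma inIdS_add e1 e2 : inIdS lam e1 -> inIdS lam e2 -> inIdS lam (padd e1 e2).
Proof. by move=> [l1 ->] [l2 ->]; exists (l1 ++ l2); exact: (esym (fsum_cat _ _ _)). Qed.

Lemma inIdS_scale k e : inIdS lam e -> inIdS lam (pscale k e).
Proof.
move=> [l ->]; exists [seq (k * t.1.1, t.1.2, t.2) | t <- l].
rewrite -[RHS]/(ideal_comb _) /ideal_comb fsum_map.
rewrite -[X in pscale k X]/(ideal_comb l) /ideal_comb pscale_fsum; congr fsum.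
by apply: functional_extensionality => t; apply: functional_extensionality => w;
  rewrite /pscale mulrA.
Qed.

Lemma inIdS_D e : inIdS lam e -> inIdS lam (pD e).
Proof.
move=> [l ->]; exists [seq (t.1.1, CDop t.1.2, t.2) | t <- l].
rewrite -[RHS]/(ideal_comb _) /ideal_comb fsum_map.
rewrite -[X in pD X]/(ideal_comb l) /ideal_comb pD_fsum; congr fsum.
by apply: functional_extensionality => t; rewrite pDZ.
Qed.

Lemma inIdS_mul_word_l u e : inIdS lam e -> inIdS lam (pmul (pword K u) e).
Proof.
move=> [l ->]; exists [seq (t.1.1, CLmul u t.1.2, t.2) | t <- l].
rewrite -[RHS]/(ideal_comb _) /ideal_comb fsum_map.
rewrite -[X in pmul _ X]/(ideal_comb l) /ideal_comb pmul_fsumr; congr fsum.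
by apply: functional_extensionality => t; rewrite pmulZr.
Qed.

Lemma inIdS_mul_word_r u e : inIdS lam e -> inIdS lam (pmul e (pword K u)).
Proof.
move=> [l ->]; exists [seq (t.1.1, CRmul t.1.2 u, t.2) | t <- l].
rewrite -[RHS]/(ideal_comb _) /ideal_comb fsum_map.
rewrite -[X in pmul X _]/(ideal_comb l) /ideal_comb pmul_fsuml; congr fsum.
by apply: functional_extensionality => t; rewrite pmulZl.
Qed.

Lemma inIdS_fsum (I : Type) (s : seq I) (c : I -> K) (F : I -> V) :
  (forall i, inIdS lam (F i)) -> inIdS lam (fsum s (fun i => pscale (c i) (F i))).
Proof.
move=> h; elim: s => [|i s IH]; first by rewrite fsum_nil; exact: inIdS_zero.
by rewrite fsum_cons; apply: inIdS_add => //; apply: inIdS_scale.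
Qed.

(* Expanding g in the basis of words reduces to the word case. *)
Lemma inIdS_mul_l g e : fsupp g -> inIdS lam e -> inIdS lam (pmul g e).
Proof.
move=> hg he; rewrite (expand hg) pmul_fsuml.
have -> : (fun u => pmul (pscale (g u) (pword K u)) e) =
          (fun u => pscale (g u) (pmul (pword K u) e)).
  by apply: functional_extensionality => u; rewrite pmulZl.
by apply: inIdS_fsum => u; apply: inIdS_mul_word_l.
Qed.

Lemma inIdS_mul_r g e : fsupp g -> inIdS lam e -> inIdS lam (pmul e g).
Proof.
move=> hg he; rewrite (expand hg) pmul_fsumr.
have -> : (fun u => pmul e (pscale (g u) (pword K u))) =
          (fun u => pscale (g u) (pmul e (pword K u))).
  by apply: functional_extensionality => u; rewrite pmulZr.
by apply: inIdS_fsum => u; apply: inIdS_mul_word_r.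
Qed.

Lemma inIdS_Selt u v : inIdS lam (Selt lam u v).
Proof.
exists [:: (1, Hole X, (u, v))]; rewrite -[RHS]/(ideal_comb _) /ideal_comb fsum_cons fsum_nil /=.
by apply: functional_extensionality => w; rewrite /padd /pscale /pzero mul1r addr0.
Qed.

Definition idcong f g := inIdS lam (padd f (popp g)).

Lemma idcong_refl f : idcong f f.
Proof.
rewrite /idcong; have -> : padd f (popp f) = @pzero K X; last exact: inIdS_zero.
by apply: functional_extensionality => w; rewrite /padd /popp subrr.
Qed.
Lemma idcong_sym f g : idcong f g -> idcong g f.
Proof.
rewrite /idcong => h; have -> : padd g (popp f) = pscale (-1) (padd f (popp g)).
  by apply: functional_extensionality => w; rewrite /padd /popp /pscale mulN1r opprB.
exact: inIdS_scale.
Qed.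
Lemma idcong_trans f g h : idcong f g -> idcong g h -> idcong f h.
Proof.
rewrite /idcong => h1 h2; have -> : padd f (popp h) = padd (padd f (popp g)) (padd g (popp h)).
  by apply: functional_extensionality => w; rewrite /padd /popp addrA subrK.
exact: inIdS_add.
Qed.
Lemma idcong_add f g f' g' : idcong f f' -> idcong g g' -> idcong (padd f g) (padd f' g').
Proof.
rewrite /idcong => h1 h2.
have -> : padd (padd f g) (popp (padd f' g')) = padd (padd f (popp f')) (padd g (popp g')).
  by apply: functional_extensionality => w; rewrite /padd /popp opprD addrACA.
exact: inIdS_add.
Qed.
Lemma idcong_opp f f' : idcong f f' -> idcong (popp f) (popp f').
Proof.
rewrite /idcong => h1.
have -> : padd (popp f) (popp (popp f')) = pscale (-1) (padd f (popp f')).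
  by apply: functional_extensionality => w; rewrite /padd /popp /pscale mulN1r opprD.
exact: inIdS_scale.
Qed.
Lemma idcong_scale k f f' : idcong f f' -> idcong (pscale k f) (pscale k f').
Proof.
rewrite /idcong => h1.
have -> : padd (pscale k f) (popp (pscale k f')) = pscale k (padd f (popp f')).
  by apply: functional_extensionality => w; rewrite /padd /popp /pscale mulrBr.
exact: inIdS_scale.
Qed.
Lemma idcong_mul f g f' g' : fsupp g -> fsupp f' ->
  idcong f f' -> idcong g g' -> idcong (pmul f g) (pmul f' g').
Proof.
rewrite /idcong => hg hf' h1 h2.
have -> : padd (pmul f g) (popp (pmul f' g')) =
          padd (pmul (padd f (popp f')) g) (pmul f' (padd g (popp g'))).
  apply: functional_extensionality => w; rewrite /padd /popp /pmul -sumrN -!big_split /=.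
  by apply: eq_bigr => p _; rewrite mulrBl mulrBr addrA subrK.
by apply: inIdS_add; [apply: inIdS_mul_r | apply: inIdS_mul_l].
Qed.
Lemma idcong_D f f' : idcong f f' -> idcong (pD f) (pD f').
Proof.
rewrite /idcong => h1.
have -> : padd (pD f) (popp (pD f')) = pD (padd f (popp f')).
  by apply: functional_extensionality => -[[x|a t] [|c r]]; rewrite /pD /padd /popp ?oppr0 ?addr0.
exact: inIdS_D.
Qed.

Lemma qof_eq f g : idcong f g -> qof lam f = qof lam g.
Proof.
move=> e; rewrite /qof; have -> // : cls lam f = cls lam g.
apply: functional_extensionality => h; apply: propositional_extensionality.
split; case=> hh hI; split => //; last exact: idcong_trans hI.
by apply: idcong_trans hI; apply: idcong_sym.
Qed.
Lemma qofE f : fsupp f -> proj1_sig (qof lam f) = cls lam f.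
Proof.
move=> hf; rewrite /qof; apply: (epsilon_spec (Qinh X lam) (fun c => proj1_sig c = cls lam f)).
by exists (exist _ (cls lam f) (ex_intro _ f (conj hf erefl))).
Qed.
Lemma rep_spec (q : Q) : fsupp (rep q) /\ proj1_sig q = cls lam (rep q).
Proof. by rewrite /rep; case: constructive_indefinite_description => f [hf e]. Qed.
Lemma fsupp_rep (q : Q) : fsupp (rep q). Proof. by have [] := rep_spec q. Qed.
Lemma qof_rep (q : Q) : qof lam (rep q) = q.
Proof.
have [hf e] := rep_spec q; have := qofE hf; rewrite -e.
move: (qof lam (rep q)) => c; case: c q {e hf} => P hP [P' hP'] /= e; subst P'.
by congr exist; apply: proof_irrelevance.
Qed.
Lemma rep_qof f : fsupp f -> idcong (rep (qof lam f)) f.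
Proof.
move=> hf; have [hr e] := rep_spec (qof lam f); rewrite (qofE hf) in e.
have : cls lam f (rep (qof lam f)) by rewrite e; split => //; exact: idcong_refl.
by case=> _ hI; apply: idcong_sym.
Qed.
Lemma qof_onto (q : Q) : exists f, fsupp f /\ q = qof lam f.
Proof. by exists (rep q); split; [exact: fsupp_rep | rewrite qof_rep]. Qed.

Lemma qof_add f g : fsupp f -> fsupp g -> ld_add (qof lam f : Q) (qof lam g) = qof lam (padd f g).
Proof. by move=> hf hg; apply: qof_eq; apply: idcong_add; apply: rep_qof. Qed.
Lemma qof_opp f : fsupp f -> ld_opp (qof lam f : Q) = qof lam (popp f).
Proof. by move=> hf; apply: qof_eq; apply: idcong_opp; apply: rep_qof. Qed.
Lemma qof_scale k f : fsupp f -> ld_scale k (qof lam f : Q) = qof lam (pscale k f).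
Proof. by move=> hf; apply: qof_eq; apply: idcong_scale; apply: rep_qof. Qed.
Lemma qof_mul f g : fsupp f -> fsupp g -> ld_mul (qof lam f : Q) (qof lam g) = qof lam (pmul f g).
Proof.
move=> hf hg; apply: qof_eq.
by apply: idcong_mul; [exact: fsupp_rep | done | exact: rep_qof | exact: rep_qof].
Qed.
Lemma qof_D f : fsupp f -> ld_D (qof lam f : Q) = qof lam (pD f).
Proof. by move=> hf; apply: qof_eq; apply: idcong_D; apply: rep_qof. Qed.

Lemma Q_kalgebra : kalgebra Q.
Proof.
apply: (@kalgebra_transfer K (Vops K X) Q (@fsupp K X) (qof lam)).
- exact: Vops_kalgebra.
- exact: fsupp_pzero.
- exact: fsupp_padd.
- exact: fsupp_popp.
- exact: fsupp_pscale.
- exact: fsupp_pmul.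
- by move=> q; have [f [hf ->]] := qof_onto q; exists f.
- by [].
- by move=> *; rewrite qof_add.
- by move=> *; rewrite qof_opp.
- by move=> *; rewrite qof_scale.
- by move=> *; rewrite qof_mul.
Qed.

Lemma Q_D_linear : (forall a b : Q, ld_D (ld_add a b) = ld_add (ld_D a) (ld_D b)) /\
  (forall k (a : Q), ld_D (ld_scale k a) = ld_scale k (ld_D a)).
Proof.
apply: (@D_linear_transfer K (Vops K X) Q (@fsupp K X) (qof lam)).
- exact: fsupp_padd.
- exact: fsupp_pscale.
- by move=> q; have [f [hf ->]] := qof_onto q; exists f.
- by move=> *; rewrite qof_add.
- by move=> *; rewrite qof_scale.
- exact: fsupp_pD.
- by move=> *; rewrite qof_D.
- by move=> a b _ _; exact: pDD.
- by move=> k a _; exact: pDZ.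
Qed.

Lemma qof_fsum (s : seq W) (c : W -> K) :
  qof lam (fsum s (fun u => pscale (c u) (pword K u))) =
  lincomb (qword lam) [seq (c u, u) | u <- s].
Proof.
elim: s => [|u s IH] /=; first by rewrite fsum_nil.
rewrite fsum_cons -qof_add; last by apply: fsupp_fsum => v; solve_fsupp.
  by rewrite IH -qof_scale //; apply: fsupp_pword.
by solve_fsupp.
Qed.

Lemma Q_span (q : Q) : exists l, q = lincomb (qword lam) l.
Proof.
exists [seq (rep q u, u) | u <- supp (rep q)].
by rewrite -qof_fsum -expand ?qof_rep //; exact: fsupp_rep.
Qed.

Lemma qword_cat u v : qword lam (wcat u v) = ld_mul (qword lam u : Q) (qword lam v).
Proof. by rewrite /qword qof_mul ?pmul_pword //; apply: fsupp_pword. Qed.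
Lemma qword_D a s : qword lam (LD a s, [::]) = ld_D (qword lam (a, s) : Q).
Proof. by rewrite /qword qof_D ?pD_pword //; apply: fsupp_pword. Qed.

(* On classes of words the lambda-Leibniz rule is the relation Selt. *)
Lemma Q_ldalg : is_ldalg lam Q.
Proof.
have [hDD hDZ] := Q_D_linear.
apply: (ldalgI Q_kalgebra hDD hDZ).
apply: (leibniz_from_spanning Q_kalgebra hDD hDZ (b := qword lam)); first exact: Q_span.
move=> u v; rewrite /leibniz_at /leibniz_rhs -qword_cat /qword.
rewrite ?qof_D ?qof_mul ?qof_scale ?qof_add; try by solve_fsupp.
by apply: qof_eq; exact: inIdS_Selt.
Qed.
End Quotient.

Lemma ldhom_zero (K : comPzRingType) (A B : ldalg_ops K) (h : A -> B) :
  kalgebra A -> kalgebra B -> is_ldhom h -> h (ld_zero A) = ld_zero B.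
Proof.
move=> HA HB [hadd _]; apply: (ld_idem_zero HB).
by rewrite -hadd (ax_add0 HA).
Qed.

Lemma ldhom_lincomb (K : comPzRingType) (A B : ldalg_ops K) (h : A -> B) (I : Type)
    (b : I -> A) l :
  kalgebra A -> kalgebra B -> is_ldhom h -> h (lincomb b l) = lincomb (fun i => h (b i)) l.
Proof.
move=> HA HB hh; elim: l => [|t l IH] /=; first exact: ldhom_zero.
by case: hh => [hadd [hsc _]]; rewrite hadd hsc IH.
Qed.

Section Freeness.
Variables (K : comPzRingType) (lam : K) (X : Type).
Local Notation Q := (Qops X lam).

Lemma ldhom_qword (B : ldalg_ops K) (f0 : X -> B) (h : Q -> B) :
  is_ldhom h -> (forall x, h (iotaQ lam x) = f0 x) -> forall w, h (qword lam w) = evW f0 w.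
Proof.
move=> [hadd [hsc [hmul hD]]] hx; elim/word_ind => [x|c s IH|a c s IH1 IH2].
- exact: hx.
- by rewrite qword_D hD IH.
- have -> : (a, c :: s) = wcat (a, [::]) (c, s) by [].
  by rewrite qword_cat hmul IH1 IH2.
Qed.

(* Existence: evaluate a representative; the result does not depend on it. *)
Section Lift.
Variables (B : ldalg_ops K) (f0 : X -> B).
Hypothesis HB : is_ldalg lam B.
Let HA := ldalg_kalgebra HB.

Definition lift (q : Q) : B := linext (evW f0) (rep q).

Lemma lift_qof f : fsupp f -> lift (qof lam f) = linext (evW f0) f.
Proof. by move=> hf; apply: (evlin_cong f0 HB); [exact: fsupp_rep | done | exact: rep_qof]. Qed.

Lemma lift_hom : is_ldhom lift.
Proof.
have fr := @fsupp_rep K lam X.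
split; [|split; [|split]] => /= *; rewrite lift_qof; try by solve_fsupp.
- exact: (linext_add HA).
- exact: (linext_scale HA).
- exact: (evlin_mul f0 HB).
- exact: (evlin_D f0 HB).
Qed.

Lemma lift_iota x : lift (iotaQ lam x) = f0 x.
Proof. by rewrite /iotaQ lift_qof ?(linext_pword HA) //; exact: fsupp_pword. Qed.
End Lift.

Lemma Q_free : @is_free_ldalg K lam X Q (iotaQ lam).
Proof.
move=> B HB f0; exists (lift f0); split.
  by split; [exact: lift_hom | exact: lift_iota].
move=> h' hh' hx' a; have [l ->] := Q_span a.
have HA := ldalg_kalgebra HB; have HQ := Q_kalgebra lam X.
rewrite (ldhom_lincomb _ _ HQ HA hh') (ldhom_lincomb _ _ HQ HA (lift_hom f0 HB)).
congr lincomb; apply: functional_extensionality => w.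
by rewrite (ldhom_qword hh' hx') (ldhom_qword (lift_hom f0 HB) (lift_iota f0 HB)).
Qed.
End Freeness.

(* Expanding D(a U V) by the lambda-Leibniz rule gives the same result whether
   the word is bracketed as a (U V) or (a U) V, for arbitrary values d, DU, DV
   of D(a), D(U), D(V): this makes the Leibniz expansion of D on words
   well defined in the model below. *)
Lemma leibniz_expansion_assoc (K : comPzRingType) (A : ldalg_ops K) (HA : kalgebra A)
    (lam : K) (a d U V DU DV : A) :
  let ad := @ld_add K A in let sc := @ld_scale K A in let mu := @ld_mul K A in
  let DUV := ad (ad (mu DU V) (mu U DV)) (sc lam (mu DU DV)) in
  let DaU := ad (ad (mu d U) (mu a DU)) (sc lam (mu d DU)) in
  ad (ad (mu d (mu U V)) (mu a DUV)) (sc lam (mu d DUV)) =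
  ad (ad (mu DaU V) (mu (mu a U) DV)) (sc lam (mu DaU DV)).
Proof.
move=> ad sc mu DUV DaU; rewrite /DUV /DaU /ad /sc /mu.
rewrite !(ax_mulDr HA) !(ax_mulDl HA) !(ax_mulZr HA) !(ax_mulZl HA) !(ax_mulA HA).
rewrite !(ax_scD HA) -!(ax_addA HA).
congr ld_add; congr ld_add.
rewrite [RHS](ld_addCA HA); congr ld_add.
by rewrite [in RHS](ld_addCA HA (ld_scale lam (ld_mul (ld_mul d U) DV))) [RHS](ld_addCA HA).
Qed.

(* A model: finitely supported functions with the product of K<X;D>, and the
   lambda-derivation defined on a word a_1 ... a_n by Leibniz expansion along
   its letters, D(a_i) being the one-letter word D(a_i).  In this model every
   D-word evaluates to itself, which separates the D-words in the quotient. *)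
Section Model.
Variables (K : comPzRingType) (lam : K) (X : Type).
Local Notation W := (word X).
Local Notation V := (W -> K).

Definition fsfun := {f : V | fsupp f}.

Definition to_fsfun (f : V) : fsfun :=
  match excluded_middle_informative (fsupp f) with
  | left H => exist _ f H
  | right _ => exist _ (@pzero K X) (@fsupp_pzero K X)
  end.

Lemma to_fsfunK f : fsupp f -> proj1_sig (to_fsfun f) = f.
Proof. by rewrite /to_fsfun; case: excluded_middle_informative. Qed.

Lemma fsfun_inj (a b : fsfun) : proj1_sig a = proj1_sig b -> a = b.
Proof. case: a b => f hf [g hg] /= e; subst g; congr exist; apply: proof_irrelevance. Qed.

Lemma valK (a : fsfun) : to_fsfun (proj1_sig a) = a.
Proof. by apply: fsfun_inj; rewrite to_fsfunK //; exact: proj2_sig. Qed.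

Definition FSops (d : fsfun -> fsfun) : ldalg_ops K :=
  @LDOps K fsfun (to_fsfun (@pzero K X))
    (fun a b => to_fsfun (padd (proj1_sig a) (proj1_sig b)))
    (fun a => to_fsfun (popp (proj1_sig a)))
    (fun k a => to_fsfun (pscale k (proj1_sig a)))
    (fun a b => to_fsfun (pmul (proj1_sig a) (proj1_sig b)))
    d.

Lemma FS_kalgebra d : kalgebra (FSops d).
Proof.
apply: (@kalgebra_transfer K (Vops K X) (FSops d) (@fsupp K X) to_fsfun).
- exact: Vops_kalgebra.
- exact: fsupp_pzero.
- exact: fsupp_padd.
- exact: fsupp_popp.
- exact: fsupp_pscale.
- exact: fsupp_pmul.
- by move=> y; exists (proj1_sig y); split; [exact: proj2_sig | rewrite valK].
- by [].
- by move=> a b ha hb /=; rewrite !to_fsfunK.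
- by move=> a ha /=; rewrite !to_fsfunK.
- by move=> k a ha /=; rewrite !to_fsfunK.
- by move=> a b ha hb /=; rewrite !to_fsfunK.
Qed.

Local Notation FS0 := (FSops id).

Definition pw (u : W) : fsfun := to_fsfun (pword K u).

Lemma pw_cat d u v : pw (wcat u v) = ld_mul (pw u : FSops d) (pw v).
Proof. by rewrite /= /pw !to_fsfunK ?pmul_pword //; solve_fsupp. Qed.

Fixpoint Dexp_word (a : letter X) (s : seq (letter X)) : FS0 :=
  let Da : FS0 := pw (LD a [::], [::]) in
  match s with
  | [::] => Da
  | c :: s' => ld_add (ld_add (ld_mul Da (pw (c, s'))) (ld_mul (pw (a, [::]) : FS0) (Dexp_word c s')))
                      (ld_scale lam (ld_mul Da (Dexp_word c s')))
  end.
Definition Dexp (w : W) : FS0 := Dexp_word w.1 w.2.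

Lemma Dexp_cat u v : Dexp (wcat u v) =
  ld_add (ld_add (ld_mul (Dexp u) (pw v)) (ld_mul (pw u : FS0) (Dexp v)))
         (ld_scale lam (ld_mul (Dexp u) (Dexp v))).
Proof.
case: u => a s; case: v => c t; rewrite /Dexp /wcat /=.
elim: s a => [|b s IH] a //=.
have e1 : pw (b, s ++ c :: t) = ld_mul (pw (b, s) : FS0) (pw (c, t)) by rewrite -pw_cat.
have e2 : pw (a, b :: s) = ld_mul (pw (a, [::]) : FS0) (pw (b, s)) by rewrite -pw_cat.
by rewrite e1 e2 IH; exact: (leibniz_expansion_assoc (FS_kalgebra id)).
Qed.

Definition Dmodel (a : fsfun) : fsfun := linext (Dexp : W -> FS0) (proj1_sig a).

Local Notation F := (FSops Dmodel).

Lemma Dmodel_add (a b : F) : ld_D (ld_add a b) = ld_add (ld_D a) (ld_D b).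
Proof.
rewrite /= /Dmodel to_fsfunK; last by apply: fsupp_padd; exact: proj2_sig.
by rewrite (linext_add (FS_kalgebra id)) //; exact: proj2_sig.
Qed.

Lemma Dmodel_scale k (a : F) : ld_D (ld_scale k a) = ld_scale k (ld_D a).
Proof.
rewrite /= /Dmodel to_fsfunK; last by apply: fsupp_pscale; exact: proj2_sig.
by rewrite (linext_scale (FS_kalgebra id)) //; exact: proj2_sig.
Qed.

Lemma Dmodel_pw u : ld_D (pw u : F) = Dexp u.
Proof. by rewrite /= /Dmodel /pw to_fsfunK ?(linext_pword (FS_kalgebra id)) //; exact: fsupp_pword. Qed.

Lemma lincomb_pw (s : seq W) (c : W -> K) :
  to_fsfun (fsum s (fun u => pscale (c u) (pword K u))) = lincomb (pw : W -> F) [seq (c u, u) | u <- s].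
Proof.
elim: s => [|u s IH] /=; first by rewrite fsum_nil.
rewrite fsum_cons -IH /pw !to_fsfunK //; solve_fsupp.
by apply: fsupp_fsum => v; solve_fsupp.
Qed.

Lemma F_span (a : F) : exists l, a = lincomb (pw : W -> F) l.
Proof.
exists [seq (proj1_sig a u, u) | u <- supp (proj1_sig a)].
by rewrite -lincomb_pw -expand ?valK //; exact: proj2_sig.
Qed.

Lemma F_ldalg : is_ldalg lam F.
Proof.
apply: (ldalgI (FS_kalgebra _) Dmodel_add Dmodel_scale).
apply: (leibniz_from_spanning (FS_kalgebra _) Dmodel_add Dmodel_scale (b := pw)).
  exact: F_span.
move=> u v; rewrite /leibniz_at /leibniz_rhs.
have -> : ld_mul (pw u : F) (pw v) = pw (wcat u v) by rewrite (pw_cat Dmodel).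
by rewrite !Dmodel_pw Dexp_cat.
Qed.

Lemma val_lincomb (l : seq (K * W)) :
  proj1_sig (lincomb (pw : W -> F) l) = fsum l (fun t => pscale t.1 (pword K t.2)).
Proof.
elim: l => [|t l IH] /=; first by rewrite fsum_nil to_fsfunK //; exact: fsupp_pzero.
rewrite fsum_cons to_fsfunK; last by apply: fsupp_padd; exact: proj2_sig.
rewrite IH to_fsfunK; last by apply: fsupp_pscale; exact: proj2_sig.
by rewrite /pw to_fsfunK //; exact: fsupp_pword.
Qed.

(* A D^omega-letter D^i(x) evaluates to itself, as Dexp of a one-letter word
   is that letter with one more D. *)
Lemma evL_Dletter (a : letter X) : is_Dletter a ->
  evL (fun x => pw (Lx x, [::]) : F) a = pw (a, [::]).
Proof.
elim: a => [x|b IH s] //=; case: s => //= hb.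
by rewrite IH //; exact: (Dmodel_pw (b, [::])).
Qed.

Lemma evW_Dword (w : W) : is_Dword w -> evW (fun x => pw (Lx x, [::]) : F) w = pw w.
Proof.
case: w => a s; rewrite /is_Dword /evW /= => /andP[ha hs].
elim: s a ha hs => [|c s IH] a ha hs; first exact: evL_Dletter.
move: hs => /= /andP[hc hs].
rewrite (evL_Dletter ha) IH //; exact: (esym (pw_cat Dmodel (a, [::]) (c, s))).
Qed.
End Model.

Section Basis.
Variables (K : comPzRingType) (lam : K) (X : Type).
Local Notation W := (word X).

Lemma lincomb_coef (l : seq (K * W)) (t0 : K * W) : uniq (map snd l) -> t0 \in l ->
  \sum_(t <- l) t.1 * pword K t.2 t0.2 = t0.1.
Proof.
elim: l => // t l IH /= /andP[hn hu]; rewrite in_cons big_cons pwordE => /orP[/eqP ->|ht0].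
  rewrite eqxx mulr1 big1_seq ?addr0 // => t' /andP[_ ht']; rewrite pwordE.
  case: eqP => [e|]; rewrite ?mulr0 //.
  by move: hn; rewrite e (map_f snd ht').
have hne : t0.2 != t.2 by apply: contraNneq hn => <-; apply: map_f.
by rewrite (negbTE hne) mulr0 add0r IH.
Qed.

Lemma lincomb_eq_in (A : ldalg_ops K) (b1 b2 : W -> A) (l : seq (K * W)) :
  (forall t, List.In t l -> b1 t.2 = b2 t.2) -> lincomb b1 l = lincomb b2 l.
Proof.
elim: l => [|t l IH] //= h; rewrite h; last by left.
by rewrite IH // => t' ht'; apply: h; right.
Qed.

(* Spanning by D-words, and independence through the universal map to the model. *)
Lemma Q_basis : @is_basis K (Qops X lam) W (@is_Dword X) (qword lam).
Proof.
split.
  move=> a; have [l ->] := Q_span a.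
  by have [l' [h e]] := in_Dspan_lincomb (Q_ldalg lam X) (@qword_cat K lam X)
    (@qword_D K lam X) l; exists l'.
move=> l hP hnd hz t ht.
pose F := FSops (Dmodel lam (X := X)).
have HF : kalgebra F := FS_kalgebra _.
have [h [[hh hx] _]] := Q_free (F_ldalg lam X) (fun x => pw K (Lx x, [::]) : F).
have := congr1 h hz.
rewrite (ldhom_lincomb _ _ (Q_kalgebra lam X) HF hh) (ldhom_zero (Q_kalgebra lam X) HF hh).
rewrite (@lincomb_eq_in _ _ (@pw K X : W -> F)) => [e|t' ht']; last first.
  by rewrite (ldhom_qword hh hx); apply: evW_Dword; apply: hP.
have := congr1 (fun a => proj1_sig a t.2) e.
rewrite val_lincomb /= to_fsfunK; last exact: fsupp_pzero.
rewrite /fsum /pscale /pzero lincomb_coef //; first exact: NoDup_uniq.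
by apply/mem_In.
Qed.
End Basis.

Theorem theorem5p5 (K : comPzRingType) (lam : K) (X : Type) :
  @is_ldalg K lam (@Qops K X lam) /\
  @is_free_ldalg K lam X (@Qops K X lam) (@iotaQ K X lam) /\
  @is_basis K (@Qops K X lam) (word X) (@is_Dword X) (@qword K X lam).
Proof.
split; first exact: Q_ldalg.
split; first exact: Q_free.
exact: Q_basis.
Qed.
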